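(* Let $\kappa$ be a regular infinite cardinal and $\mu$ a singular cardinal with $\mathrm{cf}(\mu)=\kappa$. For $X,X'\in\{{}^{\kappa}\mu,{}^{\mu}2,{}^{\mu}\kappa,{}^{\mu}\mu\}$, the spaces $(X,\mathrm{bd})$ and $(X',\mathrm{bd})$ are homeomorphic if and only if $w(X,\mathrm{bd})=w(X',\mathrm{bd})$.
   Context: For ordinals $\delta,\rho$, ${}^{\delta}\rho$ is the set of functions $\delta\to\rho$; for a partial function $s\colon\delta\rightharpoonup\rho$, $[s]=\{f\in{}^{\delta}\rho: s\subseteq f\}$. The bounded topology on ${}^{\delta}\rho$ has base $\{[s]: s\in{}^{\alpha}\rho,\ \alpha<\delta\}$; $(X,\mathrm{bd})$ denotes $X$ with this topology. $w$ denotes weight (least size of a base). *)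

Set Implicit Arguments.

(* A well-ordered set (= an ordinal up to isomorphism): strict total
   well-founded order. *)
Record WO := {
  car :> Type;
  lt : car -> car -> Prop;
  lt_irrefl : forall x, ~ lt x x;
  lt_trans : forall x y z, lt x y -> lt y z -> lt x z;
  lt_total : forall x y, x = y \/ lt x y \/ lt y x;
  lt_wf : well_founded lt
}.

Definition card_le (A B : Type) : Prop :=
  exists f : A -> B, forall x y, f x = f y -> x = y.
Definition card_eq (A B : Type) : Prop :=
  exists (f : A -> B) (g : B -> A),
    (forall x, g (f x) = x) /\ (forall y, f (g y) = y).

Definition is_cardinal (K : WO) : Prop :=
  forall x : K, ~ card_eq K {y : K | lt K y x}.

Definition infinite (A : Type) : Prop :=
  exists f : nat -> A, forall m n, f m = f n -> m = n.

Definition cofinal (K : WO) (S : K -> Prop) : Prop :=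
  forall x : K, exists y, S y /\ (x = y \/ lt K x y).

Definition cof_is (M K : WO) : Prop :=
  (exists S : M -> Prop, cofinal M S /\ card_eq {y : M | S y} K) /\
  (forall S : M -> Prop, cofinal M S -> card_le K {y : M | S y}).

Definition regular_cardinal (K : WO) : Prop :=
  infinite K /\ is_cardinal K /\ cof_is K K.

Definition singular_cardinal (M : WO) : Prop :=
  infinite M /\ is_cardinal M /\
  exists S : M -> Prop, cofinal M S /\ ~ card_le M {y : M | S y}.

Definition bd_open (D : WO) (R : Type) (U : (D -> R) -> Prop) : Prop :=
  forall f, U f -> exists a : D,
    forall g : D -> R, (forall b, lt D b a -> g b = f b) -> U g.

Definition homeomorphic (X Y : Type) (oX : (X -> Prop) -> Prop)
    (oY : (Y -> Prop) -> Prop) : Prop :=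
  exists (h : X -> Y) (h' : Y -> X),
    (forall x, h' (h x) = x) /\ (forall y, h (h' y) = y) /\
    (forall V, oY V -> oX (fun x => V (h x))) /\
    (forall U, oX U -> oY (fun y => U (h' y))).

Definition is_base (X : Type) (oX : (X -> Prop) -> Prop)
    (B : (X -> Prop) -> Prop) : Prop :=
  (forall U, B U -> oX U) /\
  (forall V, oX V -> forall x, V x -> exists U, B U /\ U x /\
      (forall y, U y -> V y)).

Definition weight_is (X : Type) (oX : (X -> Prop) -> Prop) (L : Type) : Prop :=
  (exists B, is_base oX B /\ card_eq {U : X -> Prop | B U} L) /\
  (forall B, is_base oX B -> card_le L {U : X -> Prop | B U}).

Definition same_weight (X Y : Type) (oX : (X -> Prop) -> Prop)
    (oY : (Y -> Prop) -> Prop) : Prop :=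
  exists L : Type, weight_is oX L /\ weight_is oY L.

Inductive space_kind := KappaMu | Mu2 | MuKappa | MuMu.

Definition sp_dom (kappa mu : WO) (k : space_kind) : WO :=
  match k with KappaMu => kappa | _ => mu end.
Definition sp_cod (kappa mu : WO) (k : space_kind) : Type :=
  match k with KappaMu => car mu | Mu2 => bool | MuKappa => car kappa
             | MuMu => car mu end.

Definition sp_open (kappa mu : WO) (k : space_kind) :=
  @bd_open (sp_dom kappa mu k) (sp_cod kappa mu k).

From Stdlib Require Import Classical ClassicalEpsilon FunctionalExtensionality
  PropExtensionality ProofIrrelevance Lia.
From Stdlib Require Wellfounded.Inverse_Image.

(* Let [cf D = K] and [|R| >= 2].  The space ([D -> R], bd) is homeomorphic to
   ([K -> B], bd), where [B] is the set of basic open sets; since [|B|] is the weight,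
   spaces of equal weight are homeomorphic, and weight is a topological invariant.
   The homeomorphism reads a point of [K -> B] as a branch of a tree of basic sets
   along a cofinal sequence [e : K -> D]: every basic set [cyl f p] is split into
   exactly [|B|] basic sets longer than [e xi], and the sets along a branch shrink
   to one point.  For the split, a bounded block after [p] carries a code [z : K]
   (this needs [K <= R], or [K] below some [|seg a|], which is where the
   singularity of [mu] enters); points with code [z] are split further by their
   values up to a length beyond [e z], enough room to encode every basic set
   [cyl g a] with [a <= e z]. *)

Definition choose {A : Type} {P : A -> Prop} (h : exists x, P x) : A :=
  proj1_sig (constructive_indefinite_description P h).

Lemma choose_spec {A : Type} {P : A -> Prop} (h : exists x, P x) : P (choose h).
Proof. exact (proj2_sig (constructive_indefinite_description P h)). Qed.

Lemma sig_eq {A : Type} {P : A -> Prop} (u v : {a | P a}) :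
  proj1_sig u = proj1_sig v -> u = v.
Proof. apply eq_sig_hprop. intros; apply proof_irrelevance. Qed.

Lemma Fix_unfold (A : Type) (R : A -> A -> Prop) (Rwf : well_founded R) (P : A -> Type)
  (F : forall x, (forall y, R y x -> P y) -> P x) (x : A) :
  Fix Rwf P F x = F x (fun y _ => Fix Rwf P F y).
Proof.
  apply Fix_eq. intros x0 f g H.
  replace g with f; [reflexivity|].
  apply functional_extensionality_dep; intro y.
  apply functional_extensionality_dep; intro p. apply H.
Qed.

(** * Well-orders and cardinal comparison *)

Notation "x ≺ y" := (lt _ x y) (at level 70).
Definition le (W : WO) (x y : W) := x = y \/ lt W x y.
Notation "x ≼ y" := (le _ x y) (at level 70).

Section WellOrder.
Context {W : WO}.
Implicit Types x y z : W.

Lemma le_refl x : x ≼ x.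
Proof. now left. Qed.

Lemma lt_le {x y} : x ≺ y -> x ≼ y.
Proof. now right. Qed.

Lemma lt_asym {x y} : x ≺ y -> ~ y ≺ x.
Proof. intros h1 h2. exact (lt_irrefl W x (lt_trans W _ _ _ h1 h2)). Qed.

Lemma lt_lt_trans {x y z} : x ≺ y -> y ≺ z -> x ≺ z.
Proof. apply lt_trans. Qed.

Lemma le_lt_trans {x y z} : x ≼ y -> y ≺ z -> x ≺ z.
Proof. intros [->|h] h'; [exact h'|exact (lt_lt_trans h h')]. Qed.

Lemma lt_le_trans {x y z} : x ≺ y -> y ≼ z -> x ≺ z.
Proof. intros h [<-|h']; [exact h|exact (lt_lt_trans h h')]. Qed.

Lemma lt_or_le x y : x ≺ y \/ y ≼ x.
Proof. destruct (lt_total W x y) as [->|[h|h]]; [right; left|left|right; right]; auto. Qed.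

Lemma not_lt_le x y : ~ x ≺ y -> y ≼ x.
Proof. destruct (lt_or_le x y); tauto. Qed.

Lemma le_not_lt {x y} : x ≼ y -> ~ y ≺ x.
Proof. intros [->|h] h'; [exact (lt_irrefl W _ h')|exact (lt_asym h h')]. Qed.

Lemma le_antisym {x y} : x ≼ y -> y ≼ x -> x = y.
Proof. intros [->|h] h'; [reflexivity|exfalso; exact (le_not_lt h' h)]. Qed.

Lemma exists_least (P : W -> Prop) :
  (exists x, P x) -> exists x, P x /\ forall y, P y -> x ≼ y.
Proof.
  intros [x Hx]. apply NNPP; intro Hn. revert Hx.
  induction x as [x IH] using (well_founded_ind (lt_wf W)). intro Px.
  apply Hn. exists x. split; [exact Px|]. intros y Py.
  destruct (lt_or_le y x) as [h|h]; [exfalso; exact (IH y h Py)|exact h].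
Qed.

End WellOrder.

Definition injective {A B : Type} (f : A -> B) := forall x y, f x = f y -> x = y.

Lemma card_le_refl A : card_le A A.
Proof. now exists (fun x => x). Qed.

Lemma card_le_trans {A B C} : card_le A B -> card_le B C -> card_le A C.
Proof. intros [f hf] [g hg]. exists (fun x => g (f x)). auto. Qed.

Lemma card_eq_le {A B} : card_eq A B -> card_le A B.
Proof.
  intros [f [g [gf _]]]. exists f. intros x y h.
  rewrite <- (gf x), <- (gf y), h. reflexivity.
Qed.

Lemma card_eq_sym {A B} : card_eq A B -> card_eq B A.
Proof. intros [f [g [h1 h2]]]. exists g, f. auto. Qed.

Lemma card_eq_trans {A B C} : card_eq A B -> card_eq B C -> card_eq A C.
Proof.
  intros [f [g [gf fg]]] [f' [g' [gf' fg']]].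
  exists (fun x => f' (f x)), (fun z => g (g' z)).
  split; intro; [rewrite gf', gf|rewrite fg, fg']; reflexivity.
Qed.

Lemma bijective_card_eq {A B} (h : A -> B) :
  injective h -> (forall b, exists a, h a = b) -> card_eq A B.
Proof.
  intros hi hs. exists h, (fun b => choose (hs b)). split.
  - intro a. apply hi. exact (choose_spec (hs (h a))).
  - intro b. exact (choose_spec (hs b)).
Qed.

(* Schroeder-Bernstein: [C] is the set of points of [A] whose backward
   [g]/[f]-chain stops in [A]; use [f] on [C] and [g^-1] off it. *)
Lemma card_le_antisym A B : card_le A B -> card_le B A -> card_eq A B.
Proof.
  intros [f hf] [g hg].
  set (Cn := fix Cn (n : nat) : A -> Prop := match n with
       | O => fun a => ~ exists b, g b = a
       | S m => fun a => exists a', Cn m a' /\ a = g (f a') end).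
  set (C := fun a => exists n, Cn n a).
  set (ginv := fun a => epsilon (inhabits (f a)) (fun b => g b = a)).
  assert (g_ginv : forall a, ~ C a -> g (ginv a) = a).
  { intros a ha. apply (epsilon_spec (inhabits (f a)) (fun b => g b = a)).
    apply NNPP; intro hn. apply ha. now exists O. }
  assert (C_step : forall a, C a -> C (g (f a))).
  { intros a [n hn]. exists (S n), a. auto. }
  apply (bijective_card_eq (fun a => if excluded_middle_informative (C a) then f a else ginv a)).
  - intros x y e.
    destruct (excluded_middle_informative (C x)) as [cx|cx];
    destruct (excluded_middle_informative (C y)) as [cy|cy].
    + auto.
    + exfalso. apply cy. rewrite <- (g_ginv y cy), <- e. auto.
    + exfalso. apply cx. rewrite <- (g_ginv x cx), e. auto.
    + rewrite <- (g_ginv x cx), <- (g_ginv y cy), e. reflexivity.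
  - intro b. destruct (classic (C (g b))) as [[[|n] hn]|c].
    + exfalso. apply hn. now exists b.
    + destruct hn as [a [ha e]]. apply hg in e. subst b. exists a.
      destruct (excluded_middle_informative (C a)) as [_|n']; [auto|].
      exfalso; apply n'. now exists n.
    + exists (g b). destruct (excluded_middle_informative (C (g b))); [tauto|].
      apply hg, g_ginv. auto.
Qed.

Lemma card_le_sum {A B A' B'} :
  card_le A A' -> card_le B B' -> card_le (A + B) (A' + B').
Proof.
  intros [f hf] [g hg].
  exists (fun s => match s with inl a => inl (f a) | inr b => inr (g b) end).
  intros [a|a] [b|b] e; inversion e; f_equal; auto.
Qed.

(* Hilbert's hotel: shift the image of [nat] to its odd places. *)
Lemma card_le_sum_nat A : card_le nat A -> card_le (A + nat) A.
Proof.
  intros [f hf].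
  exists (fun s => match s with
    | inl y => match excluded_middle_informative (exists n, f n = y) with
               | left h => f (S (2 * choose h)) | right _ => y end
    | inr n => f (2 * n) end).
  intros [a|a] [b|b] e.
  - destruct (excluded_middle_informative (exists n, f n = a)) as [ha|ha];
    destruct (excluded_middle_informative (exists n, f n = b)) as [hb|hb].
    + apply hf in e. assert (E : choose ha = choose hb) by lia.
      rewrite <- (choose_spec ha), <- (choose_spec hb), E. reflexivity.
    + exfalso; apply hb; eauto.
    + exfalso; apply ha; eauto.
    + congruence.
  - destruct (excluded_middle_informative (exists n, f n = a)) as [ha|ha].
    + apply hf in e. lia.
    + exfalso; apply ha; eauto.
  - destruct (excluded_middle_informative (exists n, f n = b)) as [hb|hb].
    + apply hf in e. lia.
    + exfalso; apply hb; eauto.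
  - apply hf in e. f_equal. lia.
Qed.

Lemma card_le_nat_sum P Q : card_le nat (P + Q) -> card_le nat P \/ card_le nat Q.
Proof.
  intros [g hg].
  destruct (classic (forall N, exists n p, N <= n /\ g n = inl p)) as [H|H].
  - left. destruct (choice _ H) as [next hnext].
    set (h := fix h k := match k with O => next 0 | S k' => next (S (h k')) end).
    assert (h_mono : forall k l, k < l -> h k < h l).
    { assert (step : forall k, h k < h (S k)).
      { intro k. destruct (hnext (S (h k))) as [p [hp _]]. simpl. lia. }
      intros k l hl. induction hl; [apply step|specialize (step m); lia]. }
    assert (h_inl : forall k, exists p, g (h k) = inl p).
    { intros [|k]; [destruct (hnext 0)|destruct (hnext (S (h k)))]; firstorder. }
    exists (fun k => choose (h_inl k)). intros k l e.
    assert (E : g (h k) = g (h l)) by now rewrite (choose_spec (h_inl k)), (choose_spec (h_inl l)), e.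
    apply hg in E. destruct (PeanoNat.Nat.lt_trichotomy k l) as [c|[c|c]]; auto;
      apply h_mono in c; lia.
  - right. apply not_all_ex_not in H. destruct H as [N HN].
    assert (h_inr : forall n, exists q, g (n + N) = inr q).
    { intro n. destruct (g (n + N)) as [p|q] eqn:E; eauto.
      exfalso. apply HN. exists (n + N), p. split; [lia|exact E]. }
    exists (fun n => choose (h_inr n)). intros a b e.
    assert (E : g (a + N) = g (b + N)) by now rewrite (choose_spec (h_inr a)), (choose_spec (h_inr b)), e.
    apply hg in E. lia.
Qed.

(** * Successors and initial segments *)

Definition NoMax (W : WO) := forall x : W, exists y, x ≺ y.

Definition seg {W : WO} (w : W) := {y : W | y ≺ w}.

Section Successor.
Context {W : WO} (NM : NoMax W).
Implicit Types x y z : W.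

Definition succ x : W := choose (exists_least (fun y => x ≺ y) (NM x)).

Lemma succ_lt x : x ≺ succ x.
Proof. exact (proj1 (choose_spec (exists_least (fun y => x ≺ y) (NM x)))). Qed.

Lemma succ_least {x y} : x ≺ y -> succ x ≼ y.
Proof. exact (proj2 (choose_spec (exists_least (fun y => x ≺ y) (NM x))) y). Qed.

Lemma lt_succ_le {x y} : y ≺ succ x -> y ≼ x.
Proof. intro h. apply not_lt_le. intro h'. exact (le_not_lt (succ_least h') h). Qed.

Lemma succ_mono {x y} : x ≼ y -> succ x ≼ succ y.
Proof. intros [->|h]; [apply le_refl|apply succ_least, (lt_lt_trans h), succ_lt]. Qed.

Lemma succ_inj {x y} : succ x = succ y -> x = y.
Proof.
  intro e. destruct (lt_total W x y) as [h|[h|h]]; auto; exfalso.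
  - pose proof (succ_least h) as h'. rewrite e in h'. exact (le_not_lt h' (succ_lt y)).
  - pose proof (succ_least h) as h'. rewrite <- e in h'. exact (le_not_lt h' (succ_lt x)).
Qed.

Definition is_succ z := exists x, succ x = z.

Lemma pred_lt {z} (h : is_succ z) : choose h ≺ z.
Proof. pose proof (choose_spec h) as e. simpl in e. rewrite <- e. apply succ_lt. Qed.

Lemma pred_succ x (h : is_succ (succ x)) : choose h = x.
Proof. apply succ_inj. exact (choose_spec h). Qed.

Lemma succ_or_limit z : (exists x, z = succ x) \/ ~ is_succ z.
Proof. destruct (classic (is_succ z)) as [[x h]|h]; [left; eauto|right; auto]. Qed.

(* The least element is handled as a limit. *)
Definition succ_rec {P : Type} (at_succ : W -> P -> P)
    (at_limit : forall z, (forall y, y ≺ z -> P) -> P) : W -> P :=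
  Fix (lt_wf W) (fun _ => P) (fun z rec =>
    match excluded_middle_informative (is_succ z) with
    | left h => at_succ (choose h) (rec (choose h) (pred_lt h))
    | right _ => at_limit z rec end).

Lemma succ_rec_succ {P} s l x : succ_rec (P:=P) s l (succ x) = s x (succ_rec s l x).
Proof.
  unfold succ_rec at 1. rewrite Fix_unfold.
  destruct (excluded_middle_informative (is_succ (succ x))) as [h|h].
  - rewrite pred_succ. reflexivity.
  - exfalso; apply h; now exists x.
Qed.

Lemma succ_rec_limit {P} s l z :
  ~ is_succ z -> succ_rec (P:=P) s l z = l z (fun y _ => succ_rec s l y).
Proof.
  intro hz. unfold succ_rec at 1; rewrite Fix_unfold.
  destruct (excluded_middle_informative (is_succ z)); tauto.
Qed.

Definition double : W -> W := succ_rec (fun _ x => succ (succ x)) (fun z _ => z).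
Definition parity : W -> bool := succ_rec (fun _ => negb) (fun _ _ => false).

Lemma double_succ x : double (succ x) = succ (succ (double x)).
Proof. exact (succ_rec_succ _ _ x). Qed.

Lemma double_limit {z} : ~ is_succ z -> double z = z.
Proof. exact (succ_rec_limit _ _ z). Qed.

Lemma parity_succ x : parity (succ x) = negb (parity x).
Proof. exact (succ_rec_succ _ _ x). Qed.

Lemma parity_double z : parity (double z) = false.
Proof.
  induction z as [z IH] using (well_founded_ind (lt_wf W)).
  destruct (succ_or_limit z) as [[x ->]|h].
  - rewrite double_succ, !parity_succ, IH by apply succ_lt. reflexivity.
  - rewrite double_limit by exact h. apply succ_rec_limit, h.
Qed.

Lemma double_inj z z' : double z = double z' -> z = z'.
Proof.
  revert z'. induction z as [z IH] using (well_founded_ind (lt_wf W)). intros z' e.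
  destruct (succ_or_limit z) as [[x ->]|h]; destruct (succ_or_limit z') as [[x' ->]|h'].
  - rewrite !double_succ in e. apply succ_inj, succ_inj in e.
    f_equal. apply IH; [apply succ_lt|exact e].
  - rewrite double_succ, (double_limit h') in e. exfalso; apply h'; eexists; exact e.
  - rewrite double_succ, (double_limit h) in e. exfalso; apply h; eexists; symmetry; exact e.
  - rewrite (double_limit h), (double_limit h') in e. exact e.
Qed.

Definition closed_under_succ (w : W) := forall y, y ≺ w -> succ y ≺ w.

Lemma double_lt w : closed_under_succ w -> forall z, z ≺ w -> double z ≺ w.
Proof.
  intros Hw z. induction z as [z IH] using (well_founded_ind (lt_wf W)). intro hz.
  destruct (succ_or_limit z) as [[x ->]|h].
  - rewrite double_succ. apply Hw, Hw, IH; [apply succ_lt|].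
    exact (lt_lt_trans (succ_lt x) hz).
  - rewrite double_limit; auto.
Qed.

(* [z |-> 2z] and [z |-> 2z+1] embed [seg w + seg w] into [seg w]. *)
Lemma seg_sum_le_seg w : closed_under_succ w -> card_le (seg w + seg w) (seg w).
Proof.
  intro Hw.
  exists (fun s => match s with
     | inl y => exist _ (double (proj1_sig y)) (double_lt w Hw _ (proj2_sig y))
     | inr y => exist _ (succ (double (proj1_sig y))) (Hw _ (double_lt w Hw _ (proj2_sig y)))
     end).
  intros [a|a] [b|b] e; apply (f_equal (@proj1_sig _ _)) in e; simpl in e.
  - f_equal. apply sig_eq, double_inj, e.
  - exfalso. apply (f_equal parity) in e. rewrite parity_succ, !parity_double in e. discriminate.
  - exfalso. apply (f_equal parity) in e. rewrite parity_succ, !parity_double in e. discriminate.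
  - f_equal. apply sig_eq, double_inj, succ_inj, e.
Qed.

Lemma closed_above_or_omega (w : W) :
  (exists w', w ≼ w' /\ closed_under_succ w') \/ card_le W (seg w + nat).
Proof.
  set (it := fun n => Nat.iter n succ w).
  destruct (classic (exists u, forall n, it n ≺ u)) as [Hb|Hb].
  - left. destruct (exists_least _ Hb) as [w' [H1 H2]]. exists w'. split; [exact (lt_le (H1 0))|].
    intros y hy. assert (Hy : ~ forall n, it n ≺ y) by (intro h; exact (le_not_lt (H2 y h) hy)).
    apply not_all_ex_not in Hy. destruct Hy as [n hn].
    exact (le_lt_trans (succ_mono (not_lt_le _ _ hn)) (H1 (S n))).
  - right.
    assert (Hz : forall z, w ≼ z -> exists m, z = it m).
    { intros z hz. assert (Hu : exists n, z ≼ it n).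
      { apply NNPP; intro hn. apply Hb. exists z. intro n. apply NNPP; intro h.
        apply hn. exists n. apply not_lt_le; auto. }
      destruct Hu as [n hn]. induction n as [|k IH].
      - exists 0. apply le_antisym; auto.
      - destruct (lt_or_le (it k) z) as [h|h].
        + exists (S k). apply (le_antisym hn), succ_least, h.
        + apply IH, h. }
    exists (fun z => match excluded_middle_informative (z ≺ w) with
            | left h => inl (exist _ z h)
            | right h => inr (choose (Hz z (not_lt_le _ _ h))) end).
    intros a b e.
    destruct (excluded_middle_informative (a ≺ w)) as [ha|ha];
    destruct (excluded_middle_informative (b ≺ w)) as [hb|hb]; inversion e as [E]; auto.
    rewrite (choose_spec (Hz a (not_lt_le _ _ ha))), (choose_spec (Hz b (not_lt_le _ _ hb))), E.
    reflexivity.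
Qed.

End Successor.

Section Segments.
Context {W : WO}.
Implicit Types a w x y z : W.

Lemma seg_le_wo w : card_le (seg w) W.
Proof. exists (@proj1_sig _ _). intros s s' e. apply sig_eq, e. Qed.

Lemma seg_le_seg {a b : W} : a ≼ b -> card_le (seg a) (seg b).
Proof.
  intro h. exists (fun s : seg a => exist (fun z => z ≺ b) (proj1_sig s) (lt_le_trans (proj2_sig s) h)).
  intros s s' e. apply (f_equal (@proj1_sig _ _)) in e. apply sig_eq, e.
Qed.

Lemma not_wo_le_seg : is_cardinal W -> forall w, ~ card_le W (seg w).
Proof. intros Hc w h. apply (Hc w), card_le_antisym; [exact h|apply seg_le_wo]. Qed.

Lemma not_wo_le_seg_sum (NM : NoMax W) : infinite W -> is_cardinal W ->
  forall w1 w2, ~ card_le W (seg w1 + seg w2).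
Proof.
  intros Hi Hc w1 w2 H.
  assert (Hw : exists w, card_le W (seg w + seg w)).
  { destruct (lt_or_le w1 w2) as [h|h]; [exists w2|exists w1];
      refine (card_le_trans H (card_le_sum (seg_le_seg _) (seg_le_seg _)));
      auto using lt_le, le_refl. }
  clear H. destruct Hw as [w Hw].
  destruct (classic (card_le nat (seg w))) as [Hn|Hn].
  - destruct (closed_above_or_omega NM w) as [[w' [hw hl]]|Hs].
    + apply (not_wo_le_seg Hc w'), (card_le_trans Hw).
      exact (card_le_trans (card_le_sum (seg_le_seg hw) (seg_le_seg hw)) (seg_sum_le_seg NM w' hl)).
    + exact (not_wo_le_seg Hc w (card_le_trans Hs (card_le_sum_nat _ Hn))).
  - destruct (card_le_nat_sum _ _ (card_le_trans Hi Hw)); contradiction.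
Qed.

Definition seg_wo (w : W) : WO.
Proof.
  refine {| car := seg w; lt := fun s s' => proj1_sig s ≺ proj1_sig s' |}.
  - intro s. apply lt_irrefl.
  - intros s s' s''. apply lt_trans.
  - intros s s'. destruct (lt_total W (proj1_sig s) (proj1_sig s')) as [h|[h|h]]; auto.
    left. apply sig_eq, h.
  - apply (Inverse_Image.wf_inverse_image _ _ (lt W) (@proj1_sig _ _)), lt_wf.
Defined.

End Segments.

Section Climb.
Context {A W : WO} (c : W).

Definition climb : A -> W :=
  Fix (lt_wf A) (fun _ => W) (fun a rec =>
    match excluded_middle_informative
      (exists z, c ≼ z /\ forall a' (h : a' ≺ a), rec a' h ≺ z) with
    | left h => choose (exists_least _ h)
    | right _ => c end).

Definition climb_bound (a : A) (z : W) := c ≼ z /\ forall a', a' ≺ a -> climb a' ≺ z.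

Lemma climb_least a : (exists z, climb_bound a z) ->
  climb_bound a (climb a) /\ forall z, climb_bound a z -> climb a ≼ z.
Proof.
  intro G.
  assert (E : climb a = match excluded_middle_informative (exists z, climb_bound a z) with
                        | left h => choose (exists_least _ h) | right _ => c end)
    by (unfold climb at 1; rewrite Fix_unfold; reflexivity).
  rewrite E. destruct (excluded_middle_informative _) as [h|h].
  - exact (choose_spec (exists_least _ h)).
  - exfalso. exact (h G).
Qed.

Lemma climb_eq a z : c ≼ z -> (exists z, climb_bound a z) -> z ≼ climb a ->
  (forall a', a' ≺ a -> climb a' ≺ z) -> climb a = z.
Proof.
  intros hz Ga h1 h2. apply (le_antisym (proj2 (climb_least a Ga) z (conj hz h2)) h1).
Qed.

Lemma final_segment_le_of_climb_cover :
  (forall z, c ≼ z -> exists a, (exists z, climb_bound a z) /\ z ≼ climb a /\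
                           forall a', a' ≺ a -> climb a' ≺ z) ->
  card_le {z : W | c ≼ z} A.
Proof.
  intro H. exists (fun s => choose (H (proj1_sig s) (proj2_sig s))).
  intros [z hz] [z' hz'] e. simpl in e. apply sig_eq; simpl.
  destruct (choose_spec (H z hz)) as [g1 [g2 g3]].
  destruct (choose_spec (H z' hz')) as [g1' [g2' g3']].
  rewrite <- (climb_eq _ _ hz g1 g2 g3), <- (climb_eq _ _ hz' g1' g2' g3'), e.
  reflexivity.
Qed.

(* If [climb] never gets stuck and stays bounded it is an embedding into an
   interval; otherwise it sweeps out the whole final segment above [c]. *)
Lemma interval_embedding_or_final_segment_le :
  (exists (e : W) (g : A -> W), injective g /\ forall a, c ≼ g a /\ g a ≺ e)
  \/ card_le {z : W | c ≼ z} A.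
Proof.
  destruct (classic (forall a, exists z, climb_bound a z)) as [HG|HG].
  - assert (Hinc : forall a a', a' ≺ a -> climb a' ≺ climb a)
      by (intros a a'; exact (proj2 (proj1 (climb_least a (HG a))) a')).
    assert (Hc : forall a, c ≼ climb a) by (intro a; exact (proj1 (proj1 (climb_least a (HG a))))).
    destruct (classic (exists e, forall a, climb a ≺ e)) as [[e He]|Hu].
    + left. exists e, climb. split; [|auto].
      intros x y h. destruct (lt_total A x y) as [?|[h'|h']]; auto; exfalso;
        apply Hinc in h'; rewrite h in h'; exact (lt_irrefl W _ h').
    + right. apply final_segment_le_of_climb_cover. intros z hz.
      assert (E : exists a, z ≼ climb a).
      { apply NNPP; intro hn. apply Hu. exists z. intro a. apply NNPP; intro h.
        apply hn. exists a. apply not_lt_le, h. }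
      destruct (exists_least _ E) as [a [ha1 ha2]]. exists a. split; [auto|split; [exact ha1|]].
      intros a' h'. apply NNPP; intro h''. exact (le_not_lt (ha2 a' (not_lt_le _ _ h'')) h').
  - right. apply final_segment_le_of_climb_cover. apply not_all_ex_not in HG.
    destruct (exists_least _ HG) as [a0 [h0 h0']]. intros z hz.
    assert (E : exists a, a ≺ a0 /\ z ≼ climb a).
    { apply NNPP; intro hn. apply h0. exists z. split; [exact hz|]. intros a' ha'.
      destruct (lt_or_le (climb a') z) as [?|h]; [assumption|exfalso; apply hn; eauto]. }
    destruct (exists_least _ E) as [a [[ha1 ha1'] ha2]]. exists a. split; [|split; [exact ha1'|]].
    + apply NNPP; intro hg. exact (le_not_lt (h0' a hg) ha1).
    + intros a' h'. apply NNPP; intro h''.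
      exact (le_not_lt (ha2 a' (conj (lt_lt_trans h' ha1) (not_lt_le _ _ h''))) h').
Qed.

End Climb.

(* Otherwise [W] would be covered by [seg c] and a copy of [seg a]. *)
Lemma seg_embeds_in_interval {W : WO} (NM : NoMax W) : infinite W -> is_cardinal W ->
  forall a c : W, exists (e : W) (g : seg a -> W), injective g /\ forall s, c ≼ g s /\ g s ≺ e.
Proof.
  intros Hi Hc a c.
  destruct (interval_embedding_or_final_segment_le (A := seg_wo a) c) as [H|[f hf]]; [exact H|].
  exfalso. apply (not_wo_le_seg_sum NM Hi Hc c a).
  exists (fun z => match excluded_middle_informative (z ≺ c) with
    | left h => inl (exist _ z h)
    | right h => inr (f (exist _ z (not_lt_le _ _ h))) end).
  intros x y e.
  destruct (excluded_middle_informative (x ≺ c)) as [hx|hx];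
  destruct (excluded_middle_informative (y ≺ c)) as [hy|hy]; inversion e as [E]; auto.
  apply hf in E. inversion E; auto.
Qed.

Section Cofinality.
Context {D K : WO} (Hcof : cof_is D K).

Lemma cof_no_max : infinite K -> NoMax D.
Proof.
  intros [g hg] x. apply NNPP; intro hn.
  assert (Hx : cofinal D (fun y => y = x)).
  { intro z. exists x. split; [reflexivity|].
    destruct (lt_or_le x z) as [h|h]; [exfalso; apply hn; eauto|exact h]. }
  destruct (proj2 Hcof _ Hx) as [f hf].
  assert (E : f (g 0) = f (g 1)).
  { apply sig_eq. destruct (f (g 0)), (f (g 1)); simpl; congruence. }
  apply hf, hg in E. discriminate.
Qed.

Lemma cofinal_sequence : exists e : K -> D, forall x, exists k, x ≼ e k.
Proof.
  destruct Hcof as [[S [HS [f [g [gf fg]]]]] _]. exists (fun k => proj1_sig (g k)). intro x.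
  destruct (HS x) as [y [hy hxy]]. exists (f (exist _ y hy)). rewrite gf. exact hxy.
Qed.

Lemma cof_card_le : card_le K D.
Proof.
  destruct Hcof as [[S [_ [f [g [_ fg]]]]] _]. exists (fun k => proj1_sig (g k)).
  intros x y e. rewrite <- (fg x), <- (fg y). f_equal. apply sig_eq, e.
Qed.

Lemma short_sequence_bounded : is_cardinal K ->
  forall (xi : K) (T : K -> D), exists z, forall eta, eta ≺ xi -> T eta ≺ z.
Proof.
  intros HK xi T. apply NNPP; intro hn.
  set (S := fun z => exists eta, eta ≺ xi /\ T eta = z).
  assert (HS : cofinal D S).
  { intro x. assert (Hx : ~ forall eta, eta ≺ xi -> T eta ≺ x) by (intro h; apply hn; eauto).
    apply not_all_ex_not in Hx. destruct Hx as [eta h]. apply imply_to_and in h.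
    exists (T eta). split; [exists eta; tauto|apply not_lt_le, h]. }
  apply (not_wo_le_seg HK xi), (card_le_trans (proj2 Hcof S HS)).
  assert (Hc : forall s : {z | S z}, exists eta, eta ≺ xi /\ T eta = proj1_sig s)
    by (intros [z hz]; exact hz).
  exists (fun s => exist (fun eta => eta ≺ xi) (choose (Hc s)) (proj1 (choose_spec (Hc s)))).
  intros s s' h. apply (f_equal (@proj1_sig _ _)) in h. simpl in h. apply sig_eq.
  rewrite <- (proj2 (choose_spec (Hc s))), <- (proj2 (choose_spec (Hc s'))), h. reflexivity.
Qed.

(* Otherwise [D] itself would inject into [K], hence into every cofinal subset. *)
Lemma singular_cof_le_seg : infinite D ->
  (exists S : D -> Prop, cofinal D S /\ ~ card_le D {y : D | S y}) ->
  exists a : D, card_le K (seg a).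
Proof.
  intros [d _] [S [HS HnS]].
  destruct (exists_least (fun _ => True) (ex_intro _ (d 0) I)) as [m [_ Hm]].
  destruct (interval_embedding_or_final_segment_le (A := K) m) as [[e [g [hg hg']]]|[f hf]].
  - exists e. exists (fun k => exist (fun z => z ≺ e) (g k) (proj2 (hg' k))).
    intros x y h. apply hg. apply (f_equal (@proj1_sig _ _)) in h. exact h.
  - exfalso. apply HnS. refine (card_le_trans _ (proj2 Hcof S HS)).
    exists (fun z => f (exist _ z (Hm z I))). intros x y h. apply hf in h. inversion h; auto.
Qed.

End Cofinality.

(** * The bounded topology *)

Section BoundedTopology.
Context {D : WO} {R : Type}.
Implicit Types (a b : D) (f g x : D -> R).

Definition cyl f a : (D -> R) -> Prop := fun g => forall b, b ≺ a -> g b = f b.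

Definition basic (U : (D -> R) -> Prop) := exists a f, U = cyl f a.

Definition BasicSet := {U | basic U}.

Definition cyl_basic f a : BasicSet := exist basic (cyl f a) (ex_intro _ a (ex_intro _ f eq_refl)).

Lemma cyl_self f a : cyl f a f.
Proof. intros b _; reflexivity. Qed.

Lemma cyl_ext f g a : (forall b, b ≺ a -> f b = g b) -> cyl f a = cyl g a.
Proof.
  intro h. apply functional_extensionality; intro x. apply propositional_extensionality.
  split; intros H b hb; rewrite H by exact hb; [|symmetry]; auto.
Qed.

Lemma cyl_eq_of_mem f g a x : cyl f a x -> cyl g a x -> cyl f a = cyl g a.
Proof. intros hf hg. apply cyl_ext. intros b hb. rewrite <- hf, <- hg; auto. Qed.

Lemma cyl_open f a : bd_open D (cyl f a).
Proof. intros g hg. exists a. intros h hh b hb. rewrite hh; auto. Qed.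

Lemma basic_is_base : is_base (@bd_open D R) basic.
Proof.
  split.
  - intros U [a [f ->]]. apply cyl_open.
  - intros V hV x hx. destruct (hV x hx) as [a ha]. exists (cyl x a).
    split; [now exists a, x|]. split; [apply cyl_self|]. exact ha.
Qed.

Lemma basic_rep : exists (len : BasicSet -> D) (fn : BasicSet -> D -> R),
  forall U, proj1_sig U = cyl (fn U) (len U).
Proof.
  destruct (choice (fun (U : BasicSet) (af : D * (D -> R)) => proj1_sig U = cyl (snd af) (fst af)))
    as [r hr].
  { intros [U [a [f e]]]. now exists (a, f). }
  exists (fun U => fst (r U)), (fun U => snd (r U)). exact hr.
Qed.

Section Marking.
Variables (r0 r1 : R).
Hypotheses (r01 : r0 <> r1) (NM : NoMax D).

(* A point recording both [a] and [cyl f a]. *)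
Definition mark f a : D -> R := fun b =>
  if excluded_middle_informative (b ≺ a) then f b
  else if excluded_middle_informative (b = a) then r1 else r0.

Lemma mark_lt f a b : b ≺ a -> mark f a b = f b.
Proof. intro h. unfold mark. destruct (excluded_middle_informative (b ≺ a)); tauto. Qed.

Lemma mark_at f a : mark f a a = r1.
Proof.
  unfold mark. destruct (excluded_middle_informative (a ≺ a)) as [h|_]; [exfalso; exact (lt_irrefl D a h)|].
  destruct (excluded_middle_informative (a = a)); tauto.
Qed.

Lemma mark_gt f a b : a ≺ b -> mark f a b = r0.
Proof.
  intro h. unfold mark. destruct (excluded_middle_informative (b ≺ a)) as [c|_]; [exfalso; exact (lt_asym h c)|].
  destruct (excluded_middle_informative (b = a)) as [->|_]; [exfalso; exact (lt_irrefl D a h)|reflexivity].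
Qed.

Lemma mark_below_len f f' a a' : cyl (mark f' a') (succ NM a') (mark f a) -> ~ a ≺ a'.
Proof.
  intros h hlt. apply r01. rewrite <- (mark_gt f a a' hlt), <- (mark_at f' a').
  apply h, succ_lt.
Qed.

Lemma mark_determines f f' a a' :
  cyl (mark f' a') (succ NM a') (mark f a) -> cyl (mark f a) (succ NM a) (mark f' a') ->
  cyl f a = cyl f' a'.
Proof.
  intros h h'. destruct (lt_total D a a') as [<-|[c|c]].
  - apply cyl_ext. intros b hb. rewrite <- (mark_lt f a b hb), <- (mark_lt f' a b hb).
    apply h, (lt_lt_trans hb), succ_lt.
  - exfalso. exact (mark_below_len _ _ _ _ h c).
  - exfalso. exact (mark_below_len _ _ _ _ h' c).
Qed.

Lemma basic_le_base B : is_base (@bd_open D R) B -> card_le BasicSet {U | B U}.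
Proof.
  intros [_ HB]. destruct basic_rep as [len [fn Hrep]].
  set (m := fun U => mark (fn U) (len U)).
  assert (HV : forall U, exists V, B V /\ V (m U) /\ forall y, V y -> cyl (m U) (succ NM (len U)) y)
    by (intro U; apply HB; [apply cyl_open|apply cyl_self]).
  exists (fun U => exist _ (choose (HV U)) (proj1 (choose_spec (HV U)))).
  intros U1 U2 e. apply (f_equal (@proj1_sig _ _)) in e. simpl in e.
  destruct (choose_spec (HV U1)) as [_ [h1 h1']]. destruct (choose_spec (HV U2)) as [_ [h2 h2']].
  rewrite e in h1, h1'. apply sig_eq. rewrite !Hrep.
  apply mark_determines; [apply h2', h1|apply h1', h2].
Qed.

End Marking.

Lemma weight_bd (NM : NoMax D) (r0 r1 : R) : r0 <> r1 -> weight_is (@bd_open D R) BasicSet.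
Proof.
  intro r01. split.
  - exists basic. split; [exact basic_is_base|]. now exists (fun U => U), (fun U => U).
  - exact (basic_le_base r0 r1 r01 NM).
Qed.

End BoundedTopology.

Arguments BasicSet : clear implicits.

Section Homeomorphisms.
Context {X Y Z : Type} {oX : (X -> Prop) -> Prop} {oY : (Y -> Prop) -> Prop} {oZ : (Z -> Prop) -> Prop}.

Lemma homeomorphic_sym : homeomorphic oX oY -> homeomorphic oY oX.
Proof. intros [h [h' [H1 [H2 [H3 H4]]]]]. exists h', h. auto. Qed.

Lemma homeomorphic_trans : homeomorphic oX oY -> homeomorphic oY oZ -> homeomorphic oX oZ.
Proof.
  intros [h [h' [H1 [H2 [H3 H4]]]]] [k [k' [K1 [K2 [K3 K4]]]]].
  exists (fun x => k (h x)), (fun z => h' (k' z)). split; [|split; [|split]].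
  - intro x. rewrite K1, H1. reflexivity.
  - intro z. rewrite H2, K2. reflexivity.
  - intros V hV. apply (H3 (fun y => V (k y))), K3, hV.
  - intros U hU. apply (K4 (fun y => U (h' y))), H4, hU.
Qed.

Lemma base_image : homeomorphic oX oY -> forall B, is_base oX B ->
  exists B', is_base oY B' /\ card_eq {U | B U} {V | B' V}.
Proof.
  intros [h [h' [H1 [H2 [H3 H4]]]]] B [HB1 HB2].
  assert (pull_push : forall U : X -> Prop, (fun x => U (h' (h x))) = U)
    by (intro U; apply functional_extensionality; intro x; rewrite H1; reflexivity).
  assert (push_pull : forall V : Y -> Prop, (fun y => V (h (h' y))) = V)
    by (intro V; apply functional_extensionality; intro y; rewrite H2; reflexivity).
  exists (fun V => B (fun x => V (h x))). split; [split|].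
  - intros V hV. rewrite <- push_pull. exact (H4 _ (HB1 _ hV)).
  - intros W hW y hy. destruct (HB2 _ (H3 W hW) (h' y)) as [U [hU [hU1 hU2]]].
    { rewrite H2. exact hy. }
    exists (fun z => U (h' z)). split; [rewrite pull_push; exact hU|split; [exact hU1|]].
    intros z hz. rewrite <- (H2 z). exact (hU2 _ hz).
  - assert (E : forall U : {U | B U}, B (fun x => proj1_sig U (h' (h x))))
      by (intros [U hU]; simpl; rewrite pull_push; exact hU).
    exists (fun U => exist (fun V => B (fun x => V (h x))) (fun y => proj1_sig U (h' y)) (E U)),
           (fun V : {V : Y -> Prop | B (fun x => V (h x))} =>
              exist B (fun x => proj1_sig V (h x)) (proj2_sig V)).
    split; intros [U hU]; apply sig_eq; simpl; [apply pull_push|apply push_pull].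
Qed.

End Homeomorphisms.

Lemma weight_is_homeomorphic {X Y : Type} {oX : (X -> Prop) -> Prop} {oY : (Y -> Prop) -> Prop}
  (L : Type) :
  homeomorphic oX oY -> weight_is oX L -> weight_is oY L.
Proof.
  intros Hh [[B0 [hB0 eB0]] Hmin]. split.
  - destruct (base_image Hh B0 hB0) as [B' [hB' e']]. exists B'.
    split; [exact hB'|exact (card_eq_trans (card_eq_sym e') eB0)].
  - intros C hC. destruct (base_image (homeomorphic_sym Hh) C hC) as [C' [hC' e']].
    exact (card_le_trans (Hmin C' hC') (card_eq_le (card_eq_sym e'))).
Qed.

Lemma weight_is_unique {X : Type} (oX : (X -> Prop) -> Prop) (L L' : Type) :
  weight_is oX L -> weight_is oX L' -> card_eq L L'.
Proof.
  intros [[B [hB eB]] HL] [[B' [hB' eB']] HL']. apply card_le_antisym.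
  - exact (card_le_trans (HL B' hB') (card_eq_le eB')).
  - exact (card_le_trans (HL' B hB) (card_eq_le eB)).
Qed.

Lemma homeomorphic_bd_cod (K : WO) (N N' : Type) :
  card_eq N N' -> homeomorphic (@bd_open K N) (@bd_open K N').
Proof.
  intros [f [g [gf fg]]].
  exists (fun y k => f (y k)), (fun y k => g (y k)). split; [|split; [|split]].
  - intro y. apply functional_extensionality; intro k. apply gf.
  - intro y. apply functional_extensionality; intro k. apply fg.
  - intros V hV y hy. destruct (hV _ hy) as [a ha]. exists a. intros y' hy'. apply ha.
    intros b hb. rewrite hy'; auto.
  - intros V hV y hy. destruct (hV _ hy) as [a ha]. exists a. intros y' hy'. apply ha.
    intros b hb. rewrite hy'; auto.
Qed.

(** * Splitting a basic set *)

Section Construction.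
Context {D K : WO} {R : Type}.
Variables (r0 r1 : R) (e : K -> D).
Hypotheses (r01 : r0 <> r1) (NM : NoMax D) (D_infinite : infinite D)
  (D_cardinal : is_cardinal D) (e_cofinal : forall x, exists k, x ≼ e k)
  (K_small : card_le K R \/ exists a : D, card_le K (seg a)) (NMK : NoMax K)
  (short_bounded : forall (xi : K) (T : K -> D), exists z, forall eta, eta ≺ xi -> T eta ≺ z).

Definition agree_on (x y : D -> R) (q0 q1 : D) := forall b, q0 ≼ b -> b ≺ q1 -> x b = y b.

Definition indicator (c : D) : D -> R :=
  fun b => if excluded_middle_informative (b = c) then r1 else r0.

Lemma indicator_inj c c' : indicator c c = indicator c' c -> c = c'.
Proof.
  unfold indicator. destruct (excluded_middle_informative (c = c)) as [_|]; [|tauto].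
  destruct (excluded_middle_informative (c = c')); [auto|intro E; exfalso; exact (r01 (eq_sym E))].
Qed.

(* [K] distinct patterns fit on a bounded block: as values when [K <= R], as the
   position of a single [r1] when [K] embeds in [seg a]. *)
Lemma block_code (q0 : D) : exists (q1 : D) (code : K -> D -> R),
  q0 ≺ q1 /\ forall z z', agree_on (code z) (code z') q0 q1 -> z = z'.
Proof.
  destruct K_small as [[k hk]|[a [k hk]]].
  - exists (succ NM q0), (fun z _ => k z). split; [apply succ_lt|].
    intros z z' h. apply hk, (h q0); [apply le_refl|apply succ_lt].
  - destruct (seg_embeds_in_interval NM D_infinite D_cardinal a q0) as [q1 [j [hj hj']]].
    exists q1, (fun z => indicator (j (k z))). split.
    + destruct (e_cofinal q0) as [z0 _]. destruct (hj' (k z0)) as [h1 h2]. exact (le_lt_trans h1 h2).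
    + intros z z' h. apply hk, hj, indicator_inj. apply (h (j (k z))); apply hj'.
Qed.

Lemma twin_copies (q1 a : D) (s0 : seg a) : exists (L : D) (j1 j2 : seg a -> D),
  injective j1 /\ injective j2 /\ (forall s, q1 ≼ j1 s) /\ (forall s s', j1 s ≺ j2 s') /\
  (forall s, j2 s ≺ L) /\ q1 ≺ L.
Proof.
  destruct (seg_embeds_in_interval NM D_infinite D_cardinal a q1) as [m [j1 [hj1 hj1']]].
  destruct (seg_embeds_in_interval NM D_infinite D_cardinal a m) as [L [j2 [hj2 hj2']]].
  exists L, j1, j2. repeat split; auto; try apply hj1'; try apply hj2'.
  - intros s s'. exact (lt_le_trans (proj2 (hj1' s)) (proj1 (hj2' s'))).
  - apply (le_lt_trans (proj1 (hj1' s0))), (lt_le_trans (proj2 (hj1' s0))).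
    exact (lt_le (le_lt_trans (proj1 (hj2' s0)) (proj2 (hj2' s0)))).
Qed.

Section Splice.
Context {S : Type}.
Variables (p q0 q1 : D) (f c : D -> R) (j1 j2 : S -> D) (v1 v2 : S -> R).
Hypotheses (hpq0 : p ≺ q0) (hq01 : q0 ≺ q1) (j1_inj : injective j1) (j2_inj : injective j2)
  (j1_ge : forall s, q1 ≼ j1 s) (j12 : forall s s', j1 s ≺ j2 s').

Definition splice : D -> R := fun b =>
  if excluded_middle_informative (b ≺ p) then f b
  else if excluded_middle_informative (q0 ≼ b /\ b ≺ q1) then c b
  else match excluded_middle_informative (exists s, j1 s = b) with
       | left h => v1 (choose h)
       | right _ => match excluded_middle_informative (exists s, j2 s = b) with
                    | left h => v2 (choose h) | right _ => r0 end end.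

Lemma splice_lt b : b ≺ p -> splice b = f b.
Proof. intro h. unfold splice. destruct (excluded_middle_informative (b ≺ p)); tauto. Qed.

Lemma splice_block b : q0 ≼ b -> b ≺ q1 -> splice b = c b.
Proof.
  intros h1 h2. unfold splice. destruct (excluded_middle_informative (b ≺ p)) as [h|_].
  - exfalso. exact (le_not_lt h1 (lt_lt_trans h hpq0)).
  - destruct (excluded_middle_informative _); tauto.
Qed.

Lemma splice_beyond b : q1 ≼ b -> splice b =
  match excluded_middle_informative (exists s, j1 s = b) with
  | left h => v1 (choose h)
  | right _ => match excluded_middle_informative (exists s, j2 s = b) with
               | left h => v2 (choose h) | right _ => r0 end end.
Proof.
  intro hb. unfold splice. destruct (excluded_middle_informative (b ≺ p)) as [h|_].
  - exfalso. exact (le_not_lt hb (lt_lt_trans h (lt_lt_trans hpq0 hq01))).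
  - destruct (excluded_middle_informative _) as [[_ h]|_]; [exfalso; exact (le_not_lt hb h)|reflexivity].
Qed.

Lemma splice_j1 s : splice (j1 s) = v1 s.
Proof.
  rewrite splice_beyond by apply j1_ge.
  destruct (excluded_middle_informative _) as [h|h]; [|exfalso; apply h; eauto].
  f_equal. apply j1_inj, (choose_spec h).
Qed.

Lemma splice_j2 s : splice (j2 s) = v2 s.
Proof.
  rewrite splice_beyond by exact (lt_le (le_lt_trans (j1_ge s) (j12 s s))).
  destruct (excluded_middle_informative _) as [[s' h]|_].
  { exfalso. apply (lt_irrefl D (j2 s)). rewrite <- h at 1. apply j12. }
  destruct (excluded_middle_informative _) as [h|h]; [|exfalso; apply h; eauto].
  f_equal. apply j2_inj, (choose_spec h).
Qed.

End Splice.

Lemma agree_on_of_cyl (x h : D -> R) (q0 q1 q : D) : cyl h q x -> q1 ≼ q -> agree_on x h q0 q1.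
Proof. intros hx hq b _ hb. exact (hx b (lt_le_trans hb hq)). Qed.

Lemma agree_on_trans (x y w : D -> R) q0 q1 :
  agree_on x y q0 q1 -> agree_on y w q0 q1 -> agree_on x w q0 q1.
Proof. intros h h' b hb1 hb2. rewrite h, h'; auto. Qed.

Section Pieces.
Variables (p t : D) (f : D -> R) (q0 q1 : D) (code : K -> D -> R) (L : K -> D)
  (j1 j2 : forall z, seg (succ NM (e z)) -> D).
Hypotheses (hpq0 : p ≺ q0) (htq0 : t ≺ q0) (hq01 : q0 ≺ q1)
  (code_inj : forall z z', agree_on (code z) (code z') q0 q1 -> z = z')
  (j1_inj : forall z, injective (j1 z)) (j2_inj : forall z, injective (j2 z))
  (j1_ge : forall z s, q1 ≼ j1 z s) (j12 : forall z s s', j1 z s ≺ j2 z s')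
  (j2_lt : forall z s, j2 z s ≺ L z) (q1_lt_L : forall z, q1 ≺ L z).

(* The block [[q0, q1)] of a point decides the length of its piece: [L z] if it
   carries code [z], [q1] if it carries none. *)
Definition piece (U : (D -> R) -> Prop) : Prop :=
  (exists x, cyl f p x /\ (forall z, ~ agree_on x (code z) q0 q1) /\ U = cyl x q1) \/
  (exists x z, cyl f p x /\ agree_on x (code z) q0 q1 /\ U = cyl x (L z)).

Lemma piece_shape U : piece U -> exists h q, U = cyl h q /\ p ≺ q /\ t ≺ q /\ cyl f p h.
Proof.
  assert (H : forall q, q1 ≼ q -> p ≺ q /\ t ≺ q).
  { intros q hq. split; apply (fun h => lt_le_trans (lt_lt_trans h hq01) hq); assumption. }
  intros [[x [hx [_ ->]]]|[x [z [hx [_ ->]]]]]; exists x.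
  - exists q1. destruct (H q1 (le_refl q1)). auto.
  - exists (L z). destruct (H (L z) (lt_le (q1_lt_L z))). auto.
Qed.

Lemma piece_cover x : cyl f p x -> exists U, piece U /\ U x.
Proof.
  intro hx. destruct (classic (exists z, agree_on x (code z) q0 q1)) as [[z hz]|hz].
  - exists (cyl x (L z)). split; [right; now exists x, z|apply cyl_self].
  - exists (cyl x q1). split; [left; exists x|apply cyl_self].
    split; [exact hx|split; [intros z h; apply hz; eauto|reflexivity]].
Qed.

Lemma piece_unique x U U' : piece U -> piece U' -> U x -> U' x -> U = U'.
Proof.
  assert (no_code : forall x1 x2 z, (forall z, ~ agree_on x1 (code z) q0 q1) ->
            agree_on x2 (code z) q0 q1 -> cyl x1 q1 x -> cyl x2 (L z) x -> False).
  { intros x1 x2 z h1 h2 hx1 hx2. apply (h1 z), (agree_on_trans x1 x), (agree_on_trans x x2); [| |exact h2].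
    - intros b _ hb. symmetry. exact (hx1 b hb).
    - exact (agree_on_of_cyl _ _ _ _ _ hx2 (lt_le (q1_lt_L z))). }
  intros [[x1 [_ [h1 ->]]]|[x1 [z1 [_ [h1 ->]]]]] [[x2 [_ [h2 ->]]]|[x2 [z2 [_ [h2 ->]]]]] hx hx'.
  - exact (cyl_eq_of_mem _ _ _ _ hx hx').
  - exfalso. exact (no_code _ _ _ h1 h2 hx hx').
  - exfalso. exact (no_code _ _ _ h2 h1 hx' hx).
  - assert (Ez : z1 = z2).
    { apply code_inj. apply (agree_on_trans _ x1); [intros b hb1 hb2; symmetry; exact (h1 b hb1 hb2)|].
      apply (agree_on_trans _ x); [intros b _ hb; symmetry; exact (hx b (lt_lt_trans hb (q1_lt_L z1)))|].
      apply (agree_on_trans _ x2); [exact (agree_on_of_cyl _ _ _ _ _ hx' (lt_le (q1_lt_L z2)))|exact h2]. }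
    subst z2. exact (cyl_eq_of_mem _ _ _ _ hx hx').
Qed.

(* The point coding the basic set [cyl g a], for [a <= e z]: [g] along [j1 z] and
   the position of [a] along [j2 z]. *)
Definition node_point (z : K) (a : D) (g : D -> R) : D -> R :=
  splice p q0 q1 f (code z) (j1 z) (j2 z)
    (fun s => if excluded_middle_informative (proj1_sig s ≺ a) then g (proj1_sig s) else r0)
    (fun s => indicator a (proj1_sig s)).

Lemma node_point_piece z a g : piece (cyl (node_point z a g) (L z)).
Proof.
  right. exists (node_point z a g), z. split; [|split; [|reflexivity]].
  - intros b hb. apply splice_lt, hb.
  - intros b hb1 hb2. apply splice_block; assumption.
Qed.

Lemma node_point_code z z' a a' g g' :
  cyl (node_point z a g) (L z) = cyl (node_point z' a' g') (L z') -> z = z'.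
Proof.
  intro E. assert (H : cyl (node_point z' a' g') (L z') (node_point z a g)) by (rewrite <- E; apply cyl_self).
  apply code_inj. intros b hb1 hb2.
  specialize (H b (lt_lt_trans hb2 (q1_lt_L z'))).
  unfold node_point in H. rewrite !splice_block in H by assumption. exact H.
Qed.

Lemma node_point_determines z a a' g g' : a ≺ succ NM (e z) -> a' ≺ succ NM (e z) ->
  cyl (node_point z a g) (L z) = cyl (node_point z a' g') (L z) -> cyl g a = cyl g' a'.
Proof.
  intros ha ha' E.
  assert (H : forall s, node_point z a g (j1 z s) = node_point z a' g' (j1 z s) /\
                        node_point z a g (j2 z s) = node_point z a' g' (j2 z s)).
  { assert (H : cyl (node_point z a' g') (L z) (node_point z a g)) by (rewrite <- E; apply cyl_self).
    intro s. split; apply H; [apply (lt_lt_trans (j12 z s s))|]; apply j2_lt. }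
  unfold node_point in H.
  assert (Ea : a = a').
  { destruct (H (exist _ a ha)) as [_ H2]. rewrite !splice_j2 in H2; auto.
    exact (indicator_inj _ _ H2). }
  subst a'. apply cyl_ext. intros b hb.
  destruct (H (exist _ b (lt_lt_trans hb ha))) as [H1 _]. rewrite !splice_j1 in H1; auto.
  simpl in H1. destruct (excluded_middle_informative (b ≺ a)); tauto.
Qed.

Lemma basic_le_pieces : card_le (BasicSet D R) {U | piece U}.
Proof.
  destruct (@basic_rep D R) as [len [fn Hrep]].
  destruct (choice _ e_cofinal) as [zof hzof].
  assert (Hlen : forall U, len U ≺ succ NM (e (zof (len U))))
    by (intro U; exact (le_lt_trans (hzof (len U)) (succ_lt NM _))).
  exists (fun U => exist piece _ (node_point_piece (zof (len U)) (len U) (fn U))).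
  intros U1 U2 E. apply (f_equal (@proj1_sig _ _)) in E. simpl in E.
  pose proof (node_point_code _ _ _ _ _ _ E) as Ez.
  pose proof (Hlen U2) as H2. rewrite <- Ez in E, H2.
  apply sig_eq. rewrite !Hrep. exact (node_point_determines _ _ _ _ _ (Hlen U1) H2 E).
Qed.

End Pieces.

Definition state : Type := D * (D -> R).

Definition region (s : state) : (D -> R) -> Prop := cyl (snd s) (fst s).

Definition splits (s : state) (t : D) (P : BasicSet D R -> state) : Prop :=
  (forall u, fst s ≺ fst (P u) /\ t ≺ fst (P u) /\ region s (snd (P u))) /\
  (forall x, region s x -> exists u, region (P u) x) /\
  (forall x u u', region (P u) x -> region (P u') x -> u = u').

Lemma splits_of_partition (s : state) (t : D) (A : ((D -> R) -> Prop) -> Prop) :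
  (forall U, A U -> exists s', U = region s' /\ fst s ≺ fst s' /\ t ≺ fst s' /\ region s (snd s')) ->
  (forall x, region s x -> exists U, A U /\ U x) ->
  (forall x U U', A U -> A U' -> U x -> U' x -> U = U') ->
  card_le (BasicSet D R) {U | A U} ->
  exists P, splits s t P.
Proof.
  intros Hshape Hcover Hunique Hcard.
  destruct (choice (fun (U : {U | A U}) s' => proj1_sig U = region s' /\ fst s ≺ fst s' /\
                       t ≺ fst s' /\ region s (snd s'))) as [st Hst].
  { intros [U hU]. exact (Hshape U hU). }
  assert (E : card_eq (BasicSet D R) {U | A U}).
  { apply (card_le_antisym _ _ Hcard).
    exists (fun U => exist basic (proj1_sig U)
             (ex_intro _ (fst (st U)) (ex_intro _ (snd (st U)) (proj1 (Hst U))))).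
    intros U U' h. apply (f_equal (@proj1_sig _ _)) in h. apply sig_eq, h. }
  destruct E as [fw [bw [bf fb]]].
  exists (fun u => st (fw u)). split; [|split].
  - intro u. apply Hst.
  - intros x hx. destruct (Hcover x hx) as [U [hU hUx]]. exists (bw (exist _ U hU)).
    rewrite fb. pose proof (proj1 (Hst (exist _ U hU))) as EU. simpl in EU.
    rewrite <- EU. exact hUx.
  - intros x u u' h h'. rewrite <- (bf u), <- (bf u'). f_equal. apply sig_eq.
    apply (Hunique x); try apply proj2_sig; rewrite (proj1 (Hst _)); assumption.
Qed.

Lemma region_splits (s : state) (t : D) : exists P, splits s t P.
Proof.
  destruct s as [p f].
  assert (Hm : exists m, p ≼ m /\ t ≼ m)
    by (destruct (lt_or_le p t) as [h|h]; [exists t|exists p]; auto using lt_le, le_refl).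
  destruct Hm as [m [hpm htm]]. set (q0 := succ NM m).
  destruct (block_code q0) as [q1 [code [hq01 code_inj]]].
  set (tw := fun z => twin_copies q1 (succ NM (e z)) (exist _ (e z) (succ_lt NM (e z)))).
  set (L := fun z => choose (tw z)).
  set (j1 := fun z => choose (choose_spec (tw z))).
  set (j2 := fun z => choose (choose_spec (choose_spec (tw z)))).
  assert (Htw : forall z, injective (j1 z) /\ injective (j2 z) /\ (forall s, q1 ≼ j1 z s) /\
                 (forall s s', j1 z s ≺ j2 z s') /\ (forall s, j2 z s ≺ L z) /\ q1 ≺ L z)
    by (intro z; exact (choose_spec (choose_spec (choose_spec (tw z))))).
  assert (hpq0 : p ≺ q0) by exact (le_lt_trans hpm (succ_lt NM m)).
  assert (htq0 : t ≺ q0) by exact (le_lt_trans htm (succ_lt NM m)).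
  assert (q1_lt_L : forall z, q1 ≺ L z) by apply Htw.
  apply (splits_of_partition (p, f) t (piece p f q0 q1 code L)).
  - intros U hU. destruct (piece_shape p t f q0 q1 code L hpq0 htq0 hq01 q1_lt_L U hU)
      as [h [q [-> H]]]. now exists (q, h).
  - exact (piece_cover p f q0 q1 code L).
  - exact (piece_unique p f q0 q1 code L code_inj q1_lt_L).
  - apply (basic_le_pieces p f q0 q1 code L j1 j2); auto; apply Htw.
Qed.

(** * The tree of basic sets *)

Section Tree.
Variable step : state -> D -> BasicSet D R -> state.
Hypothesis step_splits : forall s t, splits s t (step s t).

Lemma glue_bounded (xi : K) (T : forall eta, eta ≺ xi -> state) :
  exists z, forall eta (h : eta ≺ xi), fst (T eta h) ≺ z.
Proof.
  destruct (short_bounded xi (fun eta => match excluded_middle_informative (eta ≺ xi) with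
                                | left h => fst (T eta h) | right _ => e eta end)) as [z hz].
  exists z. intros eta h. specialize (hz eta h).
  destruct (excluded_middle_informative (eta ≺ xi)) as [h'|]; [|contradiction].
  rewrite (proof_irrelevance _ h h'). exact hz.
Qed.

(* The state at a limit stage: the least common extension of the earlier ones. *)
Definition glue (xi : K) (T : forall eta, eta ≺ xi -> state) : state :=
  (choose (exists_least _ (glue_bounded xi T)),
   fun b => match excluded_middle_informative (exists eta (h : eta ≺ xi), b ≺ fst (T eta h)) with
            | left H => snd (T (choose H) (choose (choose_spec H))) b
            | right _ => r0 end).

Lemma glue_len_gt xi T eta (h : eta ≺ xi) : fst (T eta h) ≺ fst (glue xi T).
Proof. exact (proj1 (choose_spec (exists_least _ (glue_bounded xi T))) eta h). Qed.

Lemma glue_len_least xi T b : b ≺ fst (glue xi T) -> exists eta (h : eta ≺ xi), b ≼ fst (T eta h).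
Proof.
  intro hb. apply NNPP; intro hn. apply (le_not_lt (x := fst (glue xi T)) (y := b)); [|exact hb].
  apply (proj2 (choose_spec (exists_least _ (glue_bounded xi T)))).
  intros eta h. apply NNPP; intro c. apply hn. exists eta, h. apply not_lt_le, c.
Qed.

Lemma glue_fn xi T b : (exists eta (h : eta ≺ xi), b ≺ fst (T eta h)) ->
  exists eta (h : eta ≺ xi), b ≺ fst (T eta h) /\ snd (glue xi T) b = snd (T eta h) b.
Proof.
  intro H. simpl. destruct (excluded_middle_informative _) as [H'|]; [|contradiction].
  exists (choose H'), (choose (choose_spec H')). split; [exact (choose_spec (choose_spec H'))|reflexivity].
Qed.

Definition branch (y : K -> BasicSet D R) : K -> state :=
  succ_rec NMK (fun eta s => step s (e eta) (y eta)) glue.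

Lemma branch_succ y eta : branch y (succ NMK eta) = step (branch y eta) (e eta) (y eta).
Proof. exact (succ_rec_succ NMK _ _ eta). Qed.

Lemma branch_limit y xi : ~ is_succ NMK xi -> branch y xi = glue xi (fun eta _ => branch y eta).
Proof. exact (succ_rec_limit NMK _ _ xi). Qed.

Lemma branch_det y y' xi : (forall eta, eta ≺ xi -> y eta = y' eta) -> branch y xi = branch y' xi.
Proof.
  induction xi as [xi IH] using (well_founded_ind (lt_wf K)). intro hy.
  destruct (succ_or_limit NMK xi) as [[eta ->]|h].
  - rewrite !branch_succ, (hy eta (succ_lt NMK eta)), (IH eta (succ_lt NMK eta)); [reflexivity|].
    intros e' he'. apply hy, (lt_lt_trans he'), succ_lt.
  - rewrite !branch_limit by exact h. f_equal.
    apply functional_extensionality_dep; intro eta. apply functional_extensionality; intro he.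
    apply IH; [exact he|]. intros e' he'. apply hy, (lt_lt_trans he' he).
Qed.

Lemma branch_coherent y xi eta : eta ≺ xi ->
  fst (branch y eta) ≺ fst (branch y xi) /\ region (branch y eta) (snd (branch y xi)).
Proof.
  revert eta. induction xi as [xi IH] using (well_founded_ind (lt_wf K)). intros eta he.
  destruct (succ_or_limit NMK xi) as [[e0 ->]|h].
  - rewrite branch_succ. destruct (proj1 (step_splits (branch y e0) (e e0)) (y e0)) as [H1 [_ H3]].
    destruct (lt_succ_le NMK he) as [->|he']; [split; assumption|].
    destruct (IH e0 (succ_lt NMK e0) eta he') as [I1 I2]. split.
    + exact (lt_lt_trans I1 H1).
    + intros b hb. rewrite H3 by exact (lt_lt_trans hb I1). apply I2, hb.
  - rewrite (branch_limit y xi h). split; [exact (glue_len_gt xi (fun eta _ => branch y eta) eta he)|].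
    intros b hb. destruct (glue_fn xi (fun eta _ => branch y eta) b) as [e' [h1 [h2 h3]]];
      [now exists eta, he|].
    rewrite h3. destruct (lt_total K eta e') as [<-|[c|c]]; [reflexivity| |].
    + apply (IH e' h1 eta c), hb.
    + symmetry. apply (IH eta he e' c), h2.
Qed.

Lemma branch_region_mono y eta xi x : eta ≼ xi -> region (branch y xi) x -> region (branch y eta) x.
Proof.
  intros [->|h] hx; [exact hx|]. destruct (branch_coherent y xi eta h) as [H1 H2].
  intros b hb. rewrite (hx b (lt_lt_trans hb H1)). apply H2, hb.
Qed.

Lemma branch_limit_len y xi b : ~ is_succ NMK xi -> b ≺ fst (branch y xi) ->
  exists eta, eta ≺ xi /\ b ≺ fst (branch y eta).
Proof.
  intros h hb. rewrite (branch_limit y xi h) in hb.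
  destruct (glue_len_least xi _ b hb) as [eta [he [->|hb']]]; [|now exists eta].
  exists (succ NMK eta). split.
  - destruct (succ_least NMK he) as [E|E]; [exfalso; apply h; now exists eta|exact E].
  - apply branch_coherent, succ_lt.
Qed.

Lemma branch_len_cofinal y b : exists xi, b ≺ fst (branch y xi).
Proof.
  destruct (e_cofinal b) as [k hk]. exists (succ NMK k). rewrite branch_succ.
  exact (le_lt_trans hk (proj1 (proj2 (proj1 (step_splits (branch y k) (e k)) (y k))))).
Qed.

Definition leaf (y : K -> BasicSet D R) : D -> R :=
  fun b => snd (branch y (choose (branch_len_cofinal y b))) b.

Lemma leaf_region y xi : region (branch y xi) (leaf y).
Proof.
  intros b hb. unfold leaf. set (xi' := choose (branch_len_cofinal y b)).
  assert (hb' : b ≺ fst (branch y xi')) by exact (choose_spec (branch_len_cofinal y b)).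
  destruct (lt_total K xi xi') as [<-|[c|c]]; [reflexivity| |].
  - apply (branch_coherent y xi' xi c), hb.
  - symmetry. apply (branch_coherent y xi xi' c), hb'.
Qed.

(* Distinct labels at the least stage where two branches differ lead into disjoint regions. *)
Lemma leaf_determines y y' xi : region (branch y xi) (leaf y') -> forall eta, eta ≺ xi -> y' eta = y eta.
Proof.
  intros H eta. induction eta as [eta IH] using (well_founded_ind (lt_wf K)). intro he.
  assert (Est : branch y' eta = branch y eta)
    by (apply branch_det; intros e' h; apply IH; [exact h|exact (lt_lt_trans h he)]).
  apply (proj2 (proj2 (step_splits (branch y eta) (e eta))) (leaf y')).
  - rewrite <- Est, <- branch_succ. apply leaf_region.
  - rewrite <- branch_succ. exact (branch_region_mono y _ _ _ (succ_least NMK he) H).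
Qed.

Lemma leaf_inj y y' : leaf y = leaf y' -> y = y'.
Proof.
  intro E. apply functional_extensionality; intro eta.
  apply (leaf_determines y' y (succ NMK eta)); [rewrite E; apply leaf_region|apply succ_lt].
Qed.

(* The branch followed by [x]: at each stage, the label of the region containing [x]. *)
Definition address (x : D -> R) : K -> BasicSet D R :=
  Fix (lt_wf K) (fun _ => BasicSet D R) (fun xi rec =>
    let s := branch (fun eta => match excluded_middle_informative (eta ≺ xi) with
                 | left h => rec eta h | right _ => cyl_basic (fun _ => r0) (e eta) end) xi in
    match excluded_middle_informative (exists u, region (step s (e xi) u) x) with
    | left h => choose h | right _ => cyl_basic (fun _ => r0) (e xi) end).

Lemma address_eq x xi : address x xi =
    match excluded_middle_informative (exists u, region (step (branch (address x) xi) (e xi) u) x) with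
    | left h => choose h | right _ => cyl_basic (fun _ => r0) (e xi) end.
Proof.
  unfold address at 1. rewrite Fix_unfold. fold (address x). cbv zeta.
  rewrite (branch_det _ (address x) xi); [reflexivity|].
  intros eta he. destruct (excluded_middle_informative (eta ≺ xi)); tauto.
Qed.

Lemma address_region x xi : region (branch (address x) xi) x.
Proof.
  induction xi as [xi IH] using (well_founded_ind (lt_wf K)).
  destruct (succ_or_limit NMK xi) as [[eta ->]|h].
  - rewrite branch_succ, (address_eq x eta).
    destruct (excluded_middle_informative _) as [H|H]; [exact (choose_spec H)|].
    exfalso. apply H, (proj1 (proj2 (step_splits _ _))), IH, succ_lt.
  - intros b hb. destruct (branch_limit_len _ xi b h hb) as [eta [he hb']].
    rewrite (IH eta he b hb'). symmetry. apply (branch_coherent _ xi eta he), hb'.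
Qed.

Lemma leaf_address x : leaf (address x) = x.
Proof.
  apply functional_extensionality; intro b. unfold leaf. symmetry.
  apply address_region, (choose_spec (branch_len_cofinal _ b)).
Qed.

Lemma bd_homeomorphic_of_step : homeomorphic (@bd_open K (BasicSet D R)) (@bd_open D R).
Proof.
  exists leaf, address. split; [|split; [|split]].
  - intro y. apply leaf_inj, leaf_address.
  - exact leaf_address.
  - intros V hV y hy. destruct (hV _ hy) as [a ha]. destruct (branch_len_cofinal y a) as [xi hxi].
    exists xi. intros y' hy'. apply ha. intros b hb.
    assert (Est : branch y' xi = branch y xi) by (apply branch_det; exact hy').
    pose proof (lt_lt_trans hb hxi) as hb'.
    rewrite (leaf_region y' xi b) by (rewrite Est; exact hb'). rewrite Est.
    symmetry. exact (leaf_region y xi b hb').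
  - intros U hU x hx. destruct (hU _ hx) as [xi hxi]. exists (fst (branch (address x) xi)).
    intros x' hx'. apply hxi. apply (leaf_determines (address x) (address x') xi).
    rewrite leaf_address. intros b hb. rewrite (hx' b hb). apply address_region, hb.
Qed.

End Tree.

Lemma bd_homeomorphic_basic : homeomorphic (@bd_open K (BasicSet D R)) (@bd_open D R).
Proof.
  destruct (choice (fun (st : state * D) P => splits (fst st) (snd st) P)) as [F HF].
  { intros [s t]. apply region_splits. }
  exact (bd_homeomorphic_of_step (fun s t => F (s, t)) (fun s t => HF (s, t))).
Qed.

End Construction.

Theorem bd_homeomorphic_basic_pow (D K : WO) (R : Type) :
  infinite D -> is_cardinal D -> cof_is D K -> regular_cardinal K ->
  (exists r0 r1 : R, r0 <> r1) -> (card_le K R \/ exists a : D, card_le K (seg a)) ->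
  homeomorphic (@bd_open K (BasicSet D R)) (@bd_open D R).
Proof.
  intros HDi HDc Hcof [HKi [HKc HKcof]] [r0 [r1 r01]] HK.
  destruct (cofinal_sequence Hcof) as [e he].
  exact (bd_homeomorphic_basic r0 r1 e r01 (cof_no_max Hcof HKi) HDi HDc he HK
           (cof_no_max HKcof HKi) (short_sequence_bounded Hcof HKc)).
Qed.

Lemma space_homeomorphic_basic_pow (kappa mu : WO) :
  regular_cardinal kappa -> singular_cardinal mu -> cof_is mu kappa -> forall k,
  homeomorphic (@bd_open kappa (BasicSet (sp_dom kappa mu k) (sp_cod kappa mu k))) (sp_open kappa mu k) /\
  weight_is (sp_open kappa mu k) (BasicSet (sp_dom kappa mu k) (sp_cod kappa mu k)).
Proof.
  intros Hk Hm Hcof k. pose proof Hk as [Hki [Hkc Hkcof]]. pose proof Hm as [Hmi [Hmc Hms]].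
  assert (two : forall X : WO, infinite X -> exists x x' : X, x <> x').
  { intros X [f hf]. exists (f 0), (f 1). intro E. apply hf in E. discriminate. }
  destruct k; split; unfold sp_open; simpl.
  - apply bd_homeomorphic_basic_pow; auto. left. exact (cof_card_le Hcof).
  - destruct (two _ Hmi) as [x [x' hx]]. exact (weight_bd (cof_no_max Hkcof Hki) _ _ hx).
  - apply bd_homeomorphic_basic_pow; auto. exists true, false; discriminate.
    right. exact (singular_cof_le_seg Hcof Hmi Hms).
  - exact (weight_bd (cof_no_max Hcof Hki) true false ltac:(discriminate)).
  - apply bd_homeomorphic_basic_pow; auto. left. apply card_le_refl.
  - destruct (two _ Hki) as [x [x' hx]]. exact (weight_bd (cof_no_max Hcof Hki) _ _ hx).
  - apply bd_homeomorphic_basic_pow; auto. left. exact (cof_card_le Hcof).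
  - destruct (two _ Hmi) as [x [x' hx]]. exact (weight_bd (cof_no_max Hcof Hki) _ _ hx).
Qed.

Theorem mainTheorem3 (kappa mu : WO) :
  regular_cardinal kappa -> singular_cardinal mu -> cof_is mu kappa ->
  forall k k' : space_kind,
    homeomorphic (sp_open kappa mu k) (sp_open kappa mu k') <->
    same_weight (sp_open kappa mu k) (sp_open kappa mu k').
Proof.
  intros Hk Hm Hcof k k'.
  destruct (space_homeomorphic_basic_pow kappa mu Hk Hm Hcof k) as [H W].
  destruct (space_homeomorphic_basic_pow kappa mu Hk Hm Hcof k') as [H' W'].
  split.
  - intro Hh. exists (BasicSet (sp_dom kappa mu k) (sp_cod kappa mu k)).
    split; [exact W|exact (weight_is_homeomorphic _ Hh W)].
  - intros [L [WL WL']].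
    apply (homeomorphic_trans (homeomorphic_sym H)), (fun h => homeomorphic_trans h H').
    apply homeomorphic_bd_cod.
    exact (card_eq_trans (weight_is_unique _ _ _ W WL) (weight_is_unique _ _ _ WL' W')).
Qed.
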